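(* Fix $L\in\mathbb Z$ and work on $Y_L=\mathbb R\times(0,2^L]\times\mathbb R$ with the objects described in the context. The quadruple $(Y_L,\mu,\nu,\mathcal C)$, where $\mathcal C(A)=\mathcal M(\mathcal N(\mathcal Q(A)))$ and $\mathcal E=\mathcal D_L$, satisfies the canopy condition for every choice of parameters $\Phi,K\ge2$.
   Context: Dyadic intervals $I(m,l)=(2^lm,2^l(m+1)]$; tiles $H(m,l,n)=I(m,l)\times(2^{l-1},2^l]\times I(n,-l)$. $\mathcal D_L$ = strips $D(m,l)=I(m,l)\times(0,2^l]\times\mathbb R$ with $l\le L$, $\sigma(D(m,l))=2^l$. $\mathcal T_L$ = trees $T(m,l,n)=\bigcup_{l'\le l}\bigcup_{m':\,I(m',l')\subseteq I(m,l)}H(m',l',N(n,l'))$ with $l\le L$ ($N(n,l')$ the integer with $I(n,-l)\subseteq I(N(n,l'),-l')$), $\tau(T(m,l,n))=2^l$. Outer measures on $Y_L$: $\mu(A)=\inf\{\sum_{S\in\mathcal S'}\sigma(S):\mathcal S'\subseteq\mathcal D_L,A\subseteq\bigcup\mathcal S'\}$, $\nu$ likewise from $(\mathcal T_L,\tau)$. $\pi$ = projection onto first coordinate, $|\cdot|$ Lebesgue measure. For $E\in\mathcal D_L$, $E_+=\{(x,s,\xi)\in E:s>\sigma(E)/2\}$. $\mathcal Q(A)=\{E\in\mathcal D_L:E_+\cap A\ne\varnothing\}$. For $\mathcal D_1\subseteq\mathcal D_L$: $\mathcal N(\mathcal D_1)=\{E\in\mathcal D_L:|\pi(E)\cap\pi(\bigcup\mathcal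 D_1)|\ge|\pi(E)|/2\}$; $\mathcal M(\mathcal D_1)$ = elements of $\mathcal D_1$ maximal under inclusion. $\mathbf B_{\mathcal C}(A)=\bigcup_{E\in\mathcal C(A)}E$. A $\mu$-covering function with parameter $\Phi$: a map $\mathcal C$ assigning to each $A$ a subcollection of pairwise disjoint elements of $\mathcal E$ with $A\subseteq\mathbf B_{\mathcal C}(A)$, $\mu(\mathbf B_{\mathcal C}(A))\le\Phi\mu(A)$, $\mathbf B_{\mathcal C}$ monotone. A collection $\mathcal A$ of pairwise disjoint sets is $\nu$-Carathéodory (parameter $K$) if $\sum_{A\in\mathcal A}\nu(U\cap A)\le K\nu(U\cap\bigcup\mathcal A)$ for all $U$. Canopy condition (parameters $\Phi,K$): $\mathcal C$ is a $\mu$-covering function with parameter $\Phi$, and for every $\nu$-Carathéodory collection $\mathcal A$ (parameter $K$) and every $D$ disjoint from $\mathbf B_{\mathcal C}(\bigcup_{A\in\mathcal A}A)$, $\mathcal A\cup\{D\}$ is $\nu$-Carathéodory (parameter $K$). *)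

From HB Require Import structures.
From mathcomp Require Import all_boot all_order all_algebra.
From mathcomp Require Import all_classical all_reals all_analysis.
Set Implicit Arguments.
Unset Strict Implicit.
Unset Printing Implicit Defensive.
Import Order.TTheory GRing.Theory Num.Theory.
Local Open Scope classical_set_scope.
Local Open Scope ring_scope.

Section Defs.
Variable R : realType.

(* points (x, s, xi) of R x R x R *)
Definition pt := (R * R * R)%type.

Definition proj1 (p : pt) : R := p.1.1.

Definition YL (L : int) : set pt :=
  [set p | 0 < p.1.2 /\ p.1.2 <= (2:R) ^ L].

Definition dyI (m l : int) : set R :=
  [set x | (2:R) ^ l * m%:~R < x /\ x <= (2:R) ^ l * (m + 1)%:~R].

Definition tile (m l n : int) : set pt :=
  [set p | dyI m l p.1.1 /\ (2:R) ^ (l - 1) < p.1.2 /\ p.1.2 <= (2:R) ^ l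
           /\ dyI n (- l) p.2].

Definition strip (m l : int) : set pt :=
  [set p | dyI m l p.1.1 /\ 0 < p.1.2 /\ p.1.2 <= (2:R) ^ l].

Definition strip_plus (m l : int) : set pt :=
  [set p | strip m l p /\ (2:R) ^ l / 2 < p.1.2].

Definition tree (m l n : int) : set pt :=
  [set p | exists l' m' N, l' <= l /\ dyI m' l' `<=` dyI m l /\
           dyI n (- l) `<=` dyI N (- l') /\ tile m' l' N p].

Definition stripsL (L : int) : set (set pt) :=
  [set E | exists m l, l <= L /\ E = strip m l].

Definition mu_out (L : int) (A : set pt) : \bar R :=
  ereal_inf [set s | exists J : set (int * int),
     (forall j, J j -> j.2 <= L) /\
     A `<=` \bigcup_(j in J) strip j.1 j.2 /\
     s = (\esum_(j in J) ((2:R) ^ j.2)%:E)%E].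

Definition nu_out (L : int) (A : set pt) : \bar R :=
  ereal_inf [set s | exists J : set (int * int * int),
     (forall j, J j -> j.1.2 <= L) /\
     A `<=` \bigcup_(j in J) tree j.1.1 j.1.2 j.2 /\
     s = (\esum_(j in J) ((2:R) ^ j.1.2)%:E)%E].

Definition Qcoll (L : int) (A : set pt) : set (set pt) :=
  [set E | exists m l, l <= L /\ E = strip m l /\ strip_plus m l `&` A !=set0].

Definition Ncoll (L : int) (D1 : set (set pt)) : set (set pt) :=
  [set E | stripsL L E /\
     (lebesgue_measure (proj1 @` E) * (2^-1)%:E <=
      lebesgue_measure (proj1 @` E `&` proj1 @` (\bigcup_(F in D1) F)))%E].

Definition Mcoll (D1 : set (set pt)) : set (set pt) :=
  [set E | D1 E /\ forall F, D1 F -> E `<=` F -> F = E].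

Definition Ccov (L : int) (A : set pt) : set (set pt) :=
  Mcoll (Ncoll L (Qcoll L A)).

Definition Bcov (C : set pt -> set (set pt)) (A : set pt) : set pt :=
  \bigcup_(E in C A) E.

Definition pairwise_disjoint (Ac : set (set pt)) : Prop :=
  forall E F, Ac E -> Ac F -> E <> F -> E `&` F = set0.

Definition covering_function (Y : set pt) (mu : set pt -> \bar R)
    (Ecoll : set (set pt)) (C : set pt -> set (set pt)) (Phi : R) : Prop :=
  (forall A, A `<=` Y ->
     C A `<=` Ecoll /\ pairwise_disjoint (C A) /\
     A `<=` Bcov C A /\
     (mu (Bcov C A) <= Phi%:E * mu A)%E) /\
  (forall A A', A `<=` A' -> A' `<=` Y -> Bcov C A `<=` Bcov C A').

Definition caratheodory (Y : set pt) (nu : set pt -> \bar R)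
    (Ac : set (set pt)) (K : R) : Prop :=
  (forall E, Ac E -> E `<=` Y) /\ pairwise_disjoint Ac /\
  forall U, U `<=` Y ->
    (\esum_(E in Ac) nu (U `&` E) <= K%:E * nu (U `&` \bigcup_(E in Ac) E))%E.

Definition canopy (Y : set pt) (mu nu : set pt -> \bar R)
    (Ecoll : set (set pt)) (C : set pt -> set (set pt)) (Phi K : R) : Prop :=
  covering_function Y mu Ecoll C Phi /\
  forall (Ac : set (set pt)) (D : set pt),
    caratheodory Y nu Ac K -> D `<=` Y ->
    D `&` Bcov C (\bigcup_(E in Ac) E) = set0 ->
    caratheodory Y nu (Ac `|` [set D]) K.

End Defs.

From HB Require Import structures.
From mathcomp Require Import all_boot all_order all_algebra.
From mathcomp Require Import all_classical all_reals all_analysis.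
From mathcomp Require Import zify lra.
Import Order.TTheory GRing.Theory Num.Theory.
Local Open Scope classical_set_scope.
Local Open Scope ring_scope.

(* Dyadic intervals are nested or disjoint, so the maximal elements of any
   family of strips are pairwise disjoint, and the total size of disjoint
   strips is the Lebesgue measure of the union of their bases.

   Covering: every point of A lies in the upper half of the strip of its own
   scale, so A is covered by the maximal elements of N(Q(A)).  Each of these
   has at least half of its base in the shadow π(⋃Q(A)), and every strip cover
   of A covers the shadow (a strip meeting A in its upper half lies inside
   any covering strip through that point); hence μ(B(A)) ≤ 2|π(⋃Q(A))| ≤ 2μ(A).

   Carathéodory: let V ⊆ A, let W be disjoint from B(A), and take a tree
   cover of V ∪ W.  Trees over strips of N(Q(A)) lie in B(A), so W is covered
   by the other trees.  On V, such another tree T(m,l,n) can be replaced by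
   the trees over the maximal Q(A)-strips inside D(m,l): their bases lie in
   the shadow, which fills less than half of I(m,l), so they cost less than
   2^l/2.  Hence ν(V) + ν(W)/2 ≤ ν(V ∪ W).  For V = U ∩ ⋃𝒜 and W = U ∩ D this
   gives the Carathéodory inequality for 𝒜 ∪ {D} as soon as K ≥ 2. *)

Section exp2z.
Context {R : realType}.

Lemma exp2z_gt0 (l : int) : 0 < (2:R) ^ l.
Proof. exact: exprz_gt0. Qed.

Lemma exp2zE_ge0 (l : int) : (0 <= ((2:R) ^ l)%:E)%E.
Proof. by rewrite lee_fin ltW ?exp2z_gt0. Qed.

Lemma ler_exp2z (l l' : int) : ((2:R) ^ l <= 2 ^ l') = (l <= l').
Proof. by rewrite ler_eXz2l //; lra. Qed.

Lemma ltr_exp2z (l l' : int) : ((2:R) ^ l < 2 ^ l') = (l < l').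
Proof. by rewrite ltr_eXz2l //; lra. Qed.

Lemma exp2zDn (l : int) (n : nat) : (2:R) ^ (l + n%:Z) = 2 ^ l * (2 ^ n)%N%:~R.
Proof. by rewrite expfzDr ?pnatr_eq0 // -exprnP -pmulrn natrX. Qed.

Lemma exp2zB1 (l : int) : (2:R) ^ (l - 1) = 2 ^ l / 2.
Proof. by rewrite expfzDr ?exprN1 //; lra. Qed.

Lemma exp2n_gt (x : R) : exists n : nat, x < 2 ^ n%:Z.
Proof.
exists (Num.bound `|x|); rewrite -exprnP -natrX.
apply: (le_lt_trans (ler_norm x)); apply: (lt_trans (archi_boundP (normr_ge0 x))).
by rewrite ltr_nat ltn_expl.
Qed.

Lemma exp2z_level {s : R} : 0 < s -> exists l : int, 2 ^ (l - 1) < s /\ s <= 2 ^ l.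
Proof.
move=> s0; have [n0 lt0] := exp2n_gt s^-1; have [n1 lt1] := exp2n_gt s.
have lo : (2:R) ^ (- n0%:Z) < s.
  by rewrite -invr_expz invf_plt ?posrE ?exp2z_gt0.
pose P k := `[< s <= (2:R) ^ (- n0%:Z + k%:Z) >].
have Pex : exists k, P k.
  exists (n0 + n1)%N; apply/asboolP; apply: (ltW (lt_le_trans lt1 _)).
  by rewrite ler_exp2z; lia.
case: (ex_minnP Pex) => k /asboolP Pk kmin.
exists (- n0%:Z + k%:Z); split => //.
case: k Pk kmin => [|k] Pk kmin; first by move: (lt_le_trans lo Pk); rewrite addr0 ltxx.
rewrite ltNge; apply/negP => Pk'.
suff : (k.+1 <= k)%N by rewrite ltnn.
apply: kmin; apply/asboolP.
by have -> : - n0%:Z + k%:Z = - n0%:Z + k.+1%:Z - 1 by lia.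
Qed.

End exp2z.

Section dyadic_intervals.
Context {R : realType}.
Local Notation dyI := (@dyI R).
Local Notation strip := (@strip R).
Local Notation lam := (@lebesgue_measure R).
Local Notation proj1 := (@proj1 R).

Lemma dyIE (m l : int) (x : R) :
  dyI m l x <-> 2 ^ l * m%:~R < x /\ x <= 2 ^ l * m%:~R + 2 ^ l.
Proof. by rewrite /dyI /= intrD mulrDr mulr1. Qed.

Lemma dyI_itv (m l : int) :
  dyI m l = `](2 ^ l * m%:~R), (2 ^ l * (m + 1)%:~R)]%classic.
Proof. by apply/seteqP; split => x; rewrite /= in_itv /= => /andP. Qed.

Lemma measurable_dyI (m l : int) : measurable (dyI m l).
Proof. by rewrite dyI_itv; apply: measurable_itv. Qed.

Lemma lebesgue_dyI (m l : int) : lam (dyI m l) = ((2:R) ^ l)%:E.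
Proof.
rewrite dyI_itv lebesgue_measure_itv /= lte_fin intrD mulrDr mulr1.
by rewrite ltrDl exp2z_gt0 -EFinB addrAC subrr add0r.
Qed.

Lemma dyI_ub (m l : int) : dyI m l (2 ^ l * (m + 1)%:~R).
Proof.
by apply/dyIE; rewrite intrD mulrDr mulr1 ltrDl exp2z_gt0.
Qed.

Lemma dyI_exists (l : int) (x : R) : exists m, dyI m l x.
Proof.
have t0 := @exp2z_gt0 R l.
exists (Num.ceil (x / 2 ^ l) - 1); apply/dyIE; split.
  by rewrite mulrC -ltr_pdivlMr // ceilB1_lt.
by rewrite intrB mulrBr mulr1 subrK mulrC -ler_pdivrMr // ceil_ge.
Qed.

Lemma dyI_subset_le {m l m' l' : int} : dyI m l `<=` dyI m' l' -> l <= l'.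
Proof.
move=> sub; rewrite -(@ler_exp2z R) -lee_fin -(lebesgue_dyI m l) -(lebesgue_dyI m' l').
by apply: le_measure => //; rewrite inE; apply: measurable_dyI.
Qed.

Lemma dyI_subset_eq {m l m' : int} : dyI m l `<=` dyI m' l -> m = m'.
Proof.
move=> /(_ _ (dyI_ub m l)) [lo hi].
have t0 := @exp2z_gt0 R l.
rewrite ltr_pM2l // ltr_int in lo; rewrite ler_pM2l // ler_int in hi; lia.
Qed.

(* Two dyadic intervals at levels [l <= l'] sharing a point are nested: with
   [k = 2 ^ (l' - l)], the overlap condition reads [k m' <= m < k (m' + 1)]. *)
Lemma dyI_subset {m l m' l' : int} {x : R} : l <= l' ->
  dyI m l x -> dyI m' l' x -> dyI m l `<=` dyI m' l'.
Proof.
move=> ll'; have [n ->] : exists n : nat, l' = l + n%:Z by exists `|l' - l|%N; lia.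
move=> [x_lo x_hi] [x_lo' x_hi'] y [y_lo y_hi].
rewrite /dyI /= exp2zDn -!mulrA -!intrM in x_lo' x_hi' *.
set k : int := (2 ^ n)%N in x_lo' x_hi' *.
have t0 := @exp2z_gt0 R l.
have ltE a b : (2 ^ l * a%:~R < 2 ^ l * b%:~R :> R) = (a < b).
  by rewrite ltr_pM2l // ltr_int.
have leE a b : (2 ^ l * a%:~R <= 2 ^ l * b%:~R :> R) = (a <= b).
  by rewrite ler_pM2l // ler_int.
have /[!ltE] lo := lt_le_trans x_lo' x_hi.
have /[!ltE] hi := lt_le_trans x_lo x_hi'.
split; first by apply: le_lt_trans y_lo; rewrite leE; lia.
by apply: (le_trans y_hi); rewrite leE; lia.
Qed.

Lemma dyI_nested {m l m' l' : int} {x : R} : dyI m l x -> dyI m' l' x ->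
  dyI m l `<=` dyI m' l' \/ dyI m' l' `<=` dyI m l.
Proof.
move=> hx hx'; have [ll'|/ltW l'l] := leP l l'.
  by left; apply: dyI_subset ll' hx hx'.
by right; apply: dyI_subset l'l hx' hx.
Qed.

Lemma dyI_parent (m l l' : int) : l <= l' -> exists M, dyI m l `<=` dyI M l'.
Proof.
move=> ll'; have [M hM] := dyI_exists l' (2 ^ l * (m + 1)%:~R).
by exists M; apply: dyI_subset ll' (dyI_ub m l) hM.
Qed.

Lemma strip_subsetE (m l m' l' : int) :
  strip m l `<=` strip m' l' <-> dyI m l `<=` dyI m' l'.
Proof.
split => sub.
  move=> x hx; have [] // := sub (x, 2 ^ l, 0).
  by split => //=; split => //; apply: exp2z_gt0.
move=> p [hp [s0 sl]]; split; [exact: sub hp | split => //].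
by apply: (le_trans sl); rewrite ler_exp2z; apply: dyI_subset_le sub.
Qed.

Lemma strip_inj {m l m' l' : int} : strip m l = strip m' l' -> (m, l) = (m', l').
Proof.
move=> e.
have /strip_subsetE sub : strip m l `<=` strip m' l' by rewrite e.
have /strip_subsetE sub' : strip m' l' `<=` strip m l by rewrite e.
have ll' : l = l' by apply/eqP; rewrite eq_le (dyI_subset_le sub) (dyI_subset_le sub').
by move: sub; rewrite -ll' => /dyI_subset_eq ->.
Qed.

Lemma strip_nested {m l m' l' : int} {p : pt R} : strip m l p -> strip m' l' p ->
  strip m l `<=` strip m' l' \/ strip m' l' `<=` strip m l.
Proof.
by move=> [hp _] [hp' _]; rewrite !strip_subsetE; apply: dyI_nested hp hp'.
Qed.

Lemma strip_proper_lt {m l m' l' : int} :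
  strip m l `<=` strip m' l' -> strip m' l' <> strip m l -> l < l'.
Proof.
move=> /strip_subsetE sub ne; rewrite lt_neqAle (dyI_subset_le sub) andbT.
by apply/eqP => ll'; apply: ne; move: sub; rewrite ll' => /dyI_subset_eq ->.
Qed.

Lemma image_proj1_strip (m l : int) : proj1 @` strip m l = dyI m l.
Proof.
apply/seteqP; split => [x [p [hp _] <-] //|x hx].
by exists (x, 2 ^ l, 0) => //; split => //=; split => //; apply: exp2z_gt0.
Qed.

End dyadic_intervals.

Section maximal_strips.
Context {R : realType} {L : int} {S : set (set (pt R))}.
Hypothesis S_strips : S `<=` stripsL L.

(* A maximal element above [E] is found among the strips of [S] containing [E]
   at the highest level [L - k], with [k] minimal. *)
Lemma Mcoll_exists (E : set (pt R)) : S E -> exists2 F, Mcoll S F & E `<=` F.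
Proof.
move=> SE; have [m [l [lL eE]]] := S_strips _ SE.
pose P k := `[< exists a, S (strip a (L - k%:Z)) /\ E `<=` strip a (L - k%:Z) >].
have Pex : exists k, P k.
  exists `|L - l|%N; apply/asboolP; exists m.
  have -> : L - `|L - l|%N%:Z = l by lia.
  by rewrite -eE; split => // ?.
case: (ex_minnP Pex) => k /asboolP [a [Sa Ea]] kmin.
exists (strip a (L - k%:Z)) => //; split => // G SG sub.
have [b [l' [l'L eG]]] := S_strips _ SG; subst G.
apply: contrapT => ne; have lt := strip_proper_lt sub ne.
suff : (k <= `|L - l'|)%N by lia.
apply: kmin; apply/asboolP; exists b.
have -> : L - `|L - l'|%N%:Z = l' by lia.
by split => //; apply: subset_trans sub.
Qed.

Lemma Mcoll_meet_eq (E F : set (pt R)) :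
  Mcoll S E -> Mcoll S F -> E `&` F !=set0 -> E = F.
Proof.
move=> [SE maxE] [SF maxF] [p [Ep Fp]].
have [m [l [_ eE]]] := S_strips _ SE; have [m' [l' [_ eF]]] := S_strips _ SF.
subst E F; case: (strip_nested Ep Fp) => sub; first by rewrite (maxE _ SF sub).
by rewrite (maxF _ SE sub).
Qed.

Lemma pairwise_disjoint_Mcoll : pairwise_disjoint (Mcoll S).
Proof.
move=> E F ME MF ne; apply/seteqP; split => // p [Ep Fp].
by apply: ne; apply: Mcoll_meet_eq ME MF _; exists p.
Qed.

Lemma trivIset_Mcoll :
  trivIset [set j | Mcoll S (strip j.1 j.2)] (fun j => @dyI R j.1 j.2).
Proof.
move=> [m l] [m' l'] /= Mj Mj' [x [hx hx']].
apply: strip_inj; apply: Mcoll_meet_eq Mj Mj' _.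
exists (x, Num.min (2 ^ l) (2 ^ l'), 0).
by split; split => //=; rewrite lt_min ge_min !exp2z_gt0 lexx ?orbT.
Qed.

End maximal_strips.

Section countable_measure.
Context {d} {T : measurableType d} {R : realType} (mu : {measure set T -> \bar R}).
Context {I : countType}.
Implicit Types (D : set I) (F : I -> set T).

Let esum_measure_pickle D F : \esum_(i in D) mu (F i) =
  (\sum_(n <oo | n \in pickle @` D) mu (oapp F set0 (unpickle n)))%E.
Proof.
rewrite nneseries_esum ?set_mem_set ?esum_image; last 2 first.
- exact: in2W (pcan_inj pickleK).
- by move=> n _; apply: measure_ge0.
by apply: eq_esum => i _; rewrite pickleK.
Qed.

Lemma measurable_bigcup_countable D F : (forall i, D i -> measurable (F i)) ->
  measurable (\bigcup_(i in D) F i).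
Proof.
move=> mF; rewrite bigcup_mkcond; apply: countable_bigcupT_measurable => [|i].
  exact: countableP.
by case: ifPn => [/set_mem /mF //|_]; apply: measurable0.
Qed.

Lemma measure_bigcup_countable D F : (forall i, D i -> measurable (F i)) ->
  trivIset D F -> mu (\bigcup_(i in D) F i) = \esum_(i in D) mu (F i).
Proof.
move=> mF tF; rewrite esum_measure_pickle -measure_bigcup; first last.
- by move=> _ _ [i Di <-] [j Dj <-]; rewrite !pickleK /= => /(tF _ _ Di Dj) ->.
- by move=> _ [i Di <-]; rewrite pickleK; apply: mF.
congr (mu _); apply/seteqP; split => [x [i Di Fx]|x [_ [i Di <-]]].
  by exists (pickle i); [exists i | rewrite pickleK].
by rewrite pickleK => Fx; exists i.
Qed.

Lemma measure_countable_subadditive D F (X : set T) :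
  (forall i, D i -> measurable (F i)) -> measurable X ->
  X `<=` \bigcup_(i in D) F i -> (mu X <= \esum_(i in D) mu (F i))%E.
Proof.
move=> mF mX XF; rewrite esum_measure_pickle eseries_mkcond.
pose G n := if n \in pickle @` D then oapp F set0 (unpickle n) else set0.
have mG n : measurable (G n).
  by rewrite /G; case: ifPn => [/set_mem [i Di <-]|_]; rewrite ?pickleK //=; apply: mF.
have XG : X `<=` \bigcup_n G n.
  move=> x /XF [i Di Fx]; exists (pickle i) => //.
  by rewrite /G ifT ?pickleK // inE; exists i.
apply: (le_trans (measure_sigma_subadditive mu mG mX XG)).
by apply: lee_nneseries => [n _ _|n _]; rewrite /G; case: ifP; rewrite ?measure0.
Qed.

End countable_measure.

Section esum_image.
Context {R : realType}.
Local Open Scope ereal_scope.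

Lemma le_esum_subset {T : choiceType} (D D' : set T) (a : T -> \bar R) :
  D' `<=` D -> (forall i, D i -> 0 <= a i) ->
  \esum_(i in D') a i <= \esum_(i in D) a i.
Proof.
move=> sub a0; rewrite [leRHS](esumID D') // (setIidr sub).
by apply: leeDl; apply: esum_ge0 => i [/a0].
Qed.

(* Restrict [e] to a set of representatives of its fibres, on which it is
   injective. *)
Lemma le_esum_image {T T' : choiceType} (D : set T) (e : T -> T') (a : T' -> \bar R) :
  (forall i, D i -> 0 <= a (e i)) ->
  \esum_(j in e @` D) a j <= \esum_(i in D) a (e i).
Proof.
move=> a0; have [->|/set0P [i0 _]] := eqVneq D set0.
  by rewrite image_set0 !esum_set0.
pose s j := xget i0 [set i | D i /\ e i = j].
have sP j : (e @` D) j -> D (s j) /\ e (s j) = j.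
  by move=> [i Di eij]; apply: (xgetPex i0 (P := [set i | D i /\ e i = j])); exists i.
have -> : e @` D = e @` (s @` (e @` D)).
  apply/seteqP; split => [j ej|_ [_ [j ej <-] <-]]; last by rewrite (sP j ej).2.
  by exists (s j); [exists j | exact: (sP j ej).2].
rewrite esum_image; last first.
  by move=> _ _ /set_mem [j ej <-] /set_mem [k ek <-]; rewrite (sP j ej).2 (sP k ek).2 => ->.
by apply: le_esum_subset => [_ [j ej <-]|//]; exact: (sP j ej).1.
Qed.

Lemma le_esum_bigcup {I T : choiceType} (D : set I) (F : I -> set T) (a : T -> \bar R) :
  (forall t, 0 <= a t) ->
  \esum_(t in \bigcup_(i in D) F i) a t <= \esum_(i in D) \esum_(t in F i) a t.
Proof.
move=> a0; have -> : \bigcup_(i in D) F i = snd @` (D `*`` F).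
  apply/seteqP; split => [t [i Di Fit]|_ [[i t] [Di Fit] <-]]; last by exists i.
  by exists (i, t).
by rewrite esum_esum //; apply: le_esum_image.
Qed.

Lemma esum_setU1 {T : choiceType} (A : set T) (t : T) (a : T -> \bar R) :
  ~ A t -> (forall i, (A `|` [set t]) i -> 0 <= a i) ->
  \esum_(i in A `|` [set t]) a i = \esum_(i in A) a i + a t.
Proof.
move=> At a0; rewrite (esumID A) //.
have -> : (A `|` [set t]) `&` A = A.
  by apply/seteqP; split => [i [] //|i Ai]; split => //; left.
have -> : (A `|` [set t]) `&` ~` A = [set t].
  by apply/seteqP; split => [i [[//|->]]|_ ->]; split => //; right.
by rewrite esum_set1 //; apply: a0; right.
Qed.

End esum_image.

Section ereal_halves.
Context {R : realType}.
Local Open Scope ereal_scope.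

Lemma lee_half_double {t : R} {y : \bar R} : 0 <= y ->
  t%:E * (2^-1)%:E <= y -> t%:E <= y + y.
Proof.
case: y => [y| |] //= y0 h; last by rewrite addey // leey.
by move: h; rewrite -EFinM -EFinD !lee_fin; lra.
Qed.

Lemma lee_double_pmul {Phi : R} {x : \bar R} : (2 <= Phi)%R -> 0 <= x ->
  x + x <= Phi%:E * x.
Proof.
case: x => [x| |] //= Phi2 x0; last by rewrite addey // mulry gtr0_sg ?mul1e //; lra.
by move: x0; rewrite -EFinD -EFinM !lee_fin; nra.
Qed.

Lemma lee_add_half {x w a b h : \bar R} :
  0 <= x -> 0 <= w -> 0 <= a -> 0 <= h ->
  x <= a + h -> w <= b -> h + h <= b -> x + w * (2^-1)%:E <= a + b.
Proof.
move=> x0 w0 a0 h0 xah wb hhb.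
case: b wb hhb => [b| |] wb hhb; last by move: (le_trans w0 wb).
  2: by rewrite addey ?leey //; case: a a0 {xah}.
case: a a0 xah => [a| |] //= a0 xah; last by rewrite addye ?leey.
case: h h0 xah hhb => [h| |] //= h0 xah hhb.
case: w w0 wb => [w| |] //= w0 wb.
case: x x0 xah => [x| |] //= x0 xah.
by move: xah wb hhb; rewrite -EFinM -!EFinD !lee_fin; lra.
Qed.

Lemma lee_pmul_add_half {K : R} {s x w y : \bar R} : (2 <= K)%R ->
  0 <= x -> 0 <= w ->
  s <= K%:E * x -> x + w * (2^-1)%:E <= y -> s + w <= K%:E * y.
Proof.
move=> K2 x0 w0 sKx xy.
have w2 : 0 <= w * (2^-1)%:E by apply: mule_ge0 => //; rewrite lee_fin; lra.
have wK : w <= K%:E * (w * (2^-1)%:E).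
  by rewrite muleCA -EFinM muleC; apply: lee_pemull => //; rewrite lee_fin; lra.
apply: (le_trans (leeD2r w sKx)); apply: (le_trans (leeD2l _ wK)).
by rewrite -ge0_muleDr //; apply: lee_wpmul2l => //; rewrite lee_fin; lra.
Qed.

End ereal_halves.

Section canopy.
Variables (R : realType) (L : int).
Local Notation dyI := (@dyI R).
Local Notation strip := (@strip R).
Local Notation proj1 := (@proj1 R).
Local Notation lam := (@lebesgue_measure R).
Local Notation mu := (@mu_out R L).
Local Notation nu := (@nu_out R L).
Local Notation Q := (@Qcoll R L).
Local Notation N := (@Ncoll R L).
Local Notation C := (@Ccov R L).
Local Notation tree := (@tree R).
Implicit Types (A V W : set (pt R)) (m l n : int) (J : set (int * int * int)).

Lemma stripsL_stripE m l : stripsL L (strip m l) <-> l <= L.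
Proof.
split => [[m' [l' [l'L /strip_inj [_ ->]]]] //|lL].
by exists m, l.
Qed.

Lemma Qcoll_strips A : Q A `<=` stripsL L.
Proof. by move=> E [m [l [lL [-> _]]]]; exists m, l. Qed.

Lemma Ncoll_strips (D1 : set (set (pt R))) : N D1 `<=` stripsL L.
Proof. by move=> E []. Qed.

Lemma mu_out_ge0 A : (0 <= mu A)%E.
Proof.
by apply/ereal_infP => _ [J [_ [_ ->]]]; apply: esum_ge0 => j _; apply: exp2zE_ge0.
Qed.

Lemma nu_out_ge0 A : (0 <= nu A)%E.
Proof.
by apply/ereal_infP => _ [J [_ [_ ->]]]; apply: esum_ge0 => j _; apply: exp2zE_ge0.
Qed.

Definition shadow A : set R := proj1 @` \bigcup_(F in Q A) F.

Lemma shadowE A : shadow A = \bigcup_(j in [set j | Q A (strip j.1 j.2)]) dyI j.1 j.2.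
Proof.
apply/seteqP; split => [_ [p [F QF Fp] <-]|x [[m l] /= Qml hx]].
  by have [m [l [_ [eF _]]]] := QF; subst F; exists (m, l) => //; case: Fp.
exists (x, 2 ^ l, 0) => //; exists (strip m l) => //.
by split => //=; split => //; apply: exp2z_gt0.
Qed.

Lemma measurable_shadow A : measurable (shadow A).
Proof.
by rewrite shadowE; apply: measurable_bigcup_countable => j _; apply: measurable_dyI.
Qed.

Lemma measurable_dyI_shadow A m l : measurable (dyI m l `&` shadow A).
Proof. by apply: measurableI; [apply: measurable_dyI | apply: measurable_shadow]. Qed.

Lemma Ncoll_stripE A m l : N (Q A) (strip m l) <->
  l <= L /\ (((2:R) ^ l)%:E * (2^-1)%:E <= lam (dyI m l `&` shadow A))%E.
Proof.
by rewrite /Ncoll /= image_proj1_strip lebesgue_dyI stripsL_stripE.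
Qed.

Lemma sub_Ncoll {D1 : set (set (pt R))} : D1 `<=` stripsL L -> D1 `<=` N D1.
Proof.
move=> D1L E D1E; split; first exact: D1L.
have [m [l [_ eE]]] := D1L _ D1E.
rewrite setIidl; last by apply: image_subset; apply: bigcup_sup.
rewrite eE image_proj1_strip lebesgue_dyI -EFinM lee_fin.
by have := @exp2z_gt0 R l; lra.
Qed.

Lemma subset_Bcov A : A `<=` YL L -> A `<=` Bcov C A.
Proof.
move=> AY p Ap; have [s0 sL] := AY p Ap.
have [l [lo hi]] := exp2z_level s0.
have lL : l <= L.
  by have := lt_le_trans lo sL; rewrite ltr_exp2z; lia.
have [m hm] := dyI_exists l p.1.1.
have Qml : Q A (strip m l).
  exists m, l; split => //; split => //; exists p; split => //.
  by split; [|rewrite -exp2zB1].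
have [F MF sub] := Mcoll_exists (Ncoll_strips _) _ (sub_Ncoll (@Qcoll_strips A) _ Qml).
by exists F => //; apply: sub.
Qed.

Lemma lebesgue_shadow_le_mu A : (lam (shadow A) <= mu A)%E.
Proof.
apply/ereal_infP => _ [J [JL [AJ ->]]].
under eq_esum => j _ do rewrite -(lebesgue_dyI j.1 j.2).
apply: measure_countable_subadditive.
- by move=> j _; apply: measurable_dyI.
- exact: measurable_shadow.
rewrite shadowE => x [[m l] /= [m' [l' [_ [/strip_inj [<- <-] [p [[[hp _] half] Ap]]]]]] hx].
have [j Jj [hj [_ sj]]] := AJ p Ap.
have lj : l <= j.2.
  by have := lt_le_trans half sj; rewrite -exp2zB1 ltr_exp2z; lia.
by exists j => //; apply: (dyI_subset lj hp hj).
Qed.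

Lemma esum_Ccov_le A :
  (\esum_(j in [set j | C A (strip j.1 j.2)]) ((2:R) ^ j.2)%:E <=
     lam (shadow A) + lam (shadow A))%E.
Proof.
set JC := [set j | C A _].
have tJC : trivIset JC (fun j => dyI j.1 j.2) := trivIset_Mcoll (Ncoll_strips _).
apply: (@le_trans _ _ (\esum_(j in JC) (lam (dyI j.1 j.2 `&` shadow A) +
                                       lam (dyI j.1 j.2 `&` shadow A)))).
  apply: le_esum => j [/Ncoll_stripE [_ half] _].
  by apply: lee_half_double => //; apply: measure_ge0.
rewrite esumD; try by move=> j _; apply: measure_ge0.
suff disj : (\esum_(j in JC) lam (dyI j.1 j.2 `&` shadow A) <= lam (shadow A))%E.
  exact: leeD.
rewrite -measure_bigcup_countable.
- apply: le_measure; rewrite ?inE; last by move=> x [j _ []].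
  + by apply: measurable_bigcup_countable => j _; apply: measurable_dyI_shadow.
  + exact: measurable_shadow.
- by move=> j _; apply: measurable_dyI_shadow.
- by move=> i j Ji Jj [x [[hi _] [hj _]]]; apply: tJC Ji Jj _; exists x.
Qed.

Lemma mu_Bcov_le (Phi : R) A : 2 <= Phi -> (mu (Bcov C A) <= Phi%:E * mu A)%E.
Proof.
move=> Phi2; set JC := [set j | C A (strip j.1 j.2)].
have muB : (mu (Bcov C A) <= \esum_(j in JC) ((2:R) ^ j.2)%:E)%E.
  apply: ereal_inf_lbound; exists JC; split; first by move=> j [/Ncoll_stripE []].
  split => // p [E CE Ep].
  have [m [l [_ eE]]] := Ncoll_strips _ _ CE.1.
  by exists (m, l); rewrite /JC /= -?eE.
apply: (le_trans muB); apply: le_trans (esum_Ccov_le A) _.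
apply: (le_trans _ (lee_double_pmul Phi2 (mu_out_ge0 A))).
by apply: leeD; apply: lebesgue_shadow_le_mu.
Qed.

Lemma Ncoll_Qcoll_subset {A A'} : A `<=` A' -> N (Q A) `<=` N (Q A').
Proof.
move=> AA' E NE; have [m [l [_ eE]]] := Ncoll_strips _ _ NE; subst E.
have [lL half] := (Ncoll_stripE A m l).1 NE; apply/Ncoll_stripE; split => //.
apply: (le_trans half); apply: le_measure; rewrite ?inE; try exact: measurable_dyI_shadow.
move=> x [hx [q [F [m' [l' [l'L [eF [r [rp rA]]]]]] Fq] qx]].
split => //; exists q => //; exists F => //.
by exists m', l'; split => //; split => //; exists r; split => //; apply: AA'.
Qed.

Lemma Bcov_monotone A A' : A `<=` A' -> Bcov C A `<=` Bcov C A'.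
Proof.
move=> AA' p [E [NE _] Ep].
have [F MF sub] := Mcoll_exists (Ncoll_strips _) _ (Ncoll_Qcoll_subset AA' _ NE).
by exists F => //; apply: sub.
Qed.

Lemma covering_function_Ccov (Phi : R) : 2 <= Phi ->
  covering_function (YL L) mu (stripsL L) C Phi.
Proof.
move=> Phi2; split => [A AY|A A' AA' _]; last exact: Bcov_monotone.
split; first by move=> E [/Ncoll_strips].
split; first exact: pairwise_disjoint_Mcoll (Ncoll_strips _).
by split; [apply: subset_Bcov | apply: mu_Bcov_le].
Qed.

Lemma tree_sub_strip m l n : tree m l n `<=` strip m l.
Proof.
move=> p [l' [m' [N' [ll' [sub [_ [hx [lo [hi _]]]]]]]]].
split; first exact: sub.
split; last by apply: (le_trans hi); rewrite ler_exp2z.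
by apply: lt_trans lo; apply: exp2z_gt0.
Qed.

Lemma nu_le_cover J X : (forall j, J j -> j.1.2 <= L) ->
  X `<=` \bigcup_(j in J) tree j.1.1 j.1.2 j.2 ->
  (nu X <= \esum_(j in J) ((2:R) ^ j.1.2)%:E)%E.
Proof. by move=> JL XJ; apply: ereal_inf_lbound; exists J. Qed.

Definition Qin A m l := [set E | Q A E /\ E `<=` strip m l].

Definition Qmax A m l := [set q : int * int | Mcoll (Qin A m l) (strip q.1 q.2)].

Lemma Qin_strips {A m l} : Qin A m l `<=` stripsL L.
Proof. by move=> E [QE _]; apply: Qcoll_strips QE. Qed.

Lemma Qmax_le {A m l} q : Qmax A m l q -> q.2 <= l.
Proof. by move=> [[_ /strip_subsetE/dyI_subset_le]]. Qed.

Lemma esum_Qmax_le A m l : l <= L -> ~ N (Q A) (strip m l) ->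
  (\esum_(q in Qmax A m l) ((2:R) ^ q.2)%:E +
   \esum_(q in Qmax A m l) ((2:R) ^ q.2)%:E <= ((2:R) ^ l)%:E)%E.
Proof.
move=> lL notN.
set U := \bigcup_(q in Qmax A m l) dyI q.1 q.2.
have sumU : \esum_(q in Qmax A m l) ((2:R) ^ q.2)%:E = lam U.
  rewrite measure_bigcup_countable; last exact: trivIset_Mcoll (@Qin_strips A m l).
    by apply: eq_esum => q _; apply/esym/lebesgue_dyI.
  by move=> q _; apply: measurable_dyI.
have Ule : (lam U <= lam (dyI m l `&` shadow A))%E.
  apply: le_measure; rewrite ?inE.
  - by apply: measurable_bigcup_countable => q _; apply: measurable_dyI.
  - exact: measurable_dyI_shadow.
  move=> x [q [[Qq /strip_subsetE sub] _] hx]; split; first exact: sub.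
  by rewrite shadowE; exists q.
have small : (lam (dyI m l `&` shadow A) < ((2:R) ^ l)%:E * (2^-1)%:E)%E.
  by rewrite ltNge; apply/negP => half; apply/notN/Ncoll_stripE.
have U0 : (0 <= lam U)%E by apply: measure_ge0.
move: (le_lt_trans Ule small) U0; rewrite sumU; case: (lam U) => [u| |] //=.
by rewrite -EFinM -EFinD !lte_fin !lee_fin; lra.
Qed.

(* [parent_index n l l'] is the paper's [N(n, l')]: the index of the dyadic
   interval of length [2 ^ - l'] containing [I(n, - l)]. *)
Definition parent_index n l l' : int :=
  xget 0 [set M | dyI n (- l) `<=` dyI M (- l')].

Lemma parent_indexP n {l l'} : l' <= l ->
  dyI n (- l) `<=` dyI (parent_index n l l') (- l').
Proof.
move=> l'l; apply: (xgetPex 0 (P := [set M | dyI n (- l) `<=` dyI M (- l')])).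
by apply: dyI_parent; rewrite lerN2.
Qed.

(* A point of [A] lying in the tree [T(m, l, n)] lies in a tile whose strip
   belongs to [Q(A)]; the maximal such strip inside [D(m, l)] carries a tree
   containing the point. *)
Lemma tree_refine {A m l n v} : l <= L -> A v -> tree m l n v ->
  exists2 q, Qmax A m l q & tree q.1 q.2 (parent_index n l q.2) v.
Proof.
move=> lL Av [l' [m' [N' [l'l [sub [subn [hv [lo [hi hn]]]]]]]]].
have Qv : Qin A m l (strip m' l').
  split; last exact/strip_subsetE.
  exists m', l'; split; first lia.
  split => //; exists v; split => //; split; last by rewrite -exp2zB1.
  by split => //; split => //; apply: lt_trans lo; apply: exp2z_gt0.
have [G MG sG] := Mcoll_exists (@Qin_strips A m l) _ Qv.
have [a [b [_ eG]]] := Qin_strips _ MG.1; subst G.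
have /strip_subsetE sub' := sG.
have l'b := dyI_subset_le sub'.
exists (a, b) => //; exists l', m', N'; split => //; split => //; split => //.
have top := @dyI_ub R n (- l).
apply: (dyI_subset _ (parent_indexP n (Qmax_le (a, b) MG) _ top) (subn _ top)).
by rewrite lerN2.
Qed.

Definition Ntrees A := [set j : int * int * int | N (Q A) (strip j.1.1 j.1.2)].

Lemma nu_le_outside {A W J} : W `&` Bcov C A = set0 ->
  (forall j, J j -> j.1.2 <= L) -> W `<=` \bigcup_(j in J) tree j.1.1 j.1.2 j.2 ->
  (nu W <= \esum_(j in J `&` ~` Ntrees A) ((2:R) ^ j.1.2)%:E)%E.
Proof.
move=> WB JL WJ; apply: nu_le_cover => [j [/JL //]|w Ww].
have [j Jj wj] := WJ w Ww; exists j => //; split => // Nj.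
have [F CF sub] := Mcoll_exists (Ncoll_strips _) _ Nj.
suff : (W `&` Bcov C A) w by rewrite WB.
by split => //; exists F => //; apply: sub; apply: (tree_sub_strip _ _ j.2).
Qed.

Lemma nu_le_refined {A V J} : V `<=` A ->
  (forall j, J j -> j.1.2 <= L) -> V `<=` \bigcup_(j in J) tree j.1.1 j.1.2 j.2 ->
  (nu V <= \esum_(j in J `&` Ntrees A) ((2:R) ^ j.1.2)%:E +
           \esum_(j in J `&` ~` Ntrees A)
             \esum_(q in Qmax A j.1.1 j.1.2) ((2:R) ^ q.2)%:E)%E.
Proof.
move=> VA JL VJ.
pose lift (j : int * int * int) (q : int * int) := (q.1, q.2, parent_index j.2 j.1.2 q.2).
pose F j := if `[< Ntrees A j >] then [set j] else lift j @` Qmax A j.1.1 j.1.2.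
apply: (le_trans (nu_le_cover (\bigcup_(j in J) F j) _ _ _)).
- move=> t [j Jj]; rewrite /F; case: asboolP => [_ -> | _ [q Mq <-]]; first exact: JL.
  by apply: le_trans (Qmax_le q Mq) (JL j Jj).
- move=> v Vv; have [j Jj vj] := VJ v Vv; rewrite /F.
  have [Nj|notNj] := pselect (Ntrees A j).
    by exists j; [exists j; rewrite // asboolT | ].
  have [q Mq vq] := tree_refine (JL j Jj) (VA v Vv) vj.
  by exists (lift j q) => //; exists j; rewrite // asboolF //; exists q.
apply: (le_trans (le_esum_bigcup _ _ _ (fun t => exp2zE_ge0 t.1.2))).
rewrite (esumID (Ntrees A)) => [|j _]; last by apply: esum_ge0 => t _; apply: exp2zE_ge0.
apply: leeD; apply: le_esum => j [_ Nj]; rewrite /F.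
- by rewrite asboolT // esum_set1 ?lexx //; apply: exp2zE_ge0.
- by rewrite asboolF // esum_image // => -[a b] [a' b'] _ _ [-> ->].
Qed.

Lemma nu_setU_ge A V W : V `<=` A -> W `&` Bcov C A = set0 ->
  (nu V + nu W * (2^-1)%:E <= nu (V `|` W))%E.
Proof.
move=> VA WB; apply/ereal_infP => _ [J [JL [VWJ ->]]].
rewrite (esumID (Ntrees A)) => [|j _]; last exact: exp2zE_ge0.
have hV := nu_le_refined VA JL (fun v Vv => VWJ v (or_introl Vv)).
have hW := nu_le_outside WB JL (fun w Ww => VWJ w (or_intror Ww)).
apply: (lee_add_half _ _ _ _ hV hW); rewrite ?nu_out_ge0 //.
- by apply: esum_ge0 => j _; apply: exp2zE_ge0.
- by apply: esum_ge0 => j _; apply: esum_ge0 => q _; apply: exp2zE_ge0.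
rewrite -esumD => [|j _|j _]; try by apply: esum_ge0 => q _; apply: exp2zE_ge0.
by apply: le_esum => j [Jj /= notNj]; apply: esum_Qmax_le => //; apply: JL.
Qed.

Lemma pairwise_disjoint_setU1 (Ac : set (set (pt R))) (D : set (pt R)) :
  pairwise_disjoint Ac -> (forall E, Ac E -> E `&` D = set0) ->
  pairwise_disjoint (Ac `|` [set D]).
Proof.
move=> disj disjD E F [AE|->] [AF|->] ne //; first exact: disj.
  exact: disjD.
by rewrite setIC; apply: disjD.
Qed.

Lemma caratheodory_setU1 (K : R) (Ac : set (set (pt R))) (D : set (pt R)) :
  2 <= K -> caratheodory (YL L) nu Ac K -> D `<=` YL L ->
  D `&` Bcov C (\bigcup_(E in Ac) E) = set0 ->
  caratheodory (YL L) nu (Ac `|` [set D]) K.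
Proof.
move=> K2 [AcY [disj carAc]] DY DB; set A0 := \bigcup_(E in Ac) E in DB.
have A0B : A0 `<=` Bcov C A0.
  by apply: subset_Bcov => p [E AE Ep]; apply: AcY AE _ Ep.
have disjD E : Ac E -> E `&` D = set0.
  move=> AE; apply/seteqP; split => // p [Ep Dp].
  by rewrite -DB; split => //; apply: A0B; exists E.
split; first by move=> E [/AcY //|->].
split; first exact: pairwise_disjoint_setU1.
move=> U UY; have [AcD|notAcD] := pselect (Ac D).
  by rewrite (setUidl (_ : [set D] `<=` Ac)) ?carAc // => _ ->.
rewrite esum_setU1 //; last by move=> *; apply: nu_out_ge0.
rewrite bigcup_setU bigcup_set1 setIUr.
apply: (lee_pmul_add_half K2 _ _ (carAc U UY)); rewrite ?nu_out_ge0 //.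
apply: (nu_setU_ge A0); first by move=> p [].
by apply/seteqP; split => // p [[_ Dp] Bp]; rewrite -DB.
Qed.

End canopy.

Theorem lemma4p6 (R : realType) (L : int) (Phi K : R) :
  2 <= Phi -> 2 <= K ->
  canopy (@YL R L) (@mu_out R L) (@nu_out R L) (@stripsL R L) (@Ccov R L) Phi K.
Proof.
move=> Phi2 K2; split; first exact: covering_function_Ccov.
by move=> Ac D; apply: caratheodory_setU1.
Qed.
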